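(* Let $0\to V\to\widehat A\xrightarrow{j}A\to0$ be an abelian extension of a Com-PreLie algebra $A$ by a representation $(V,\mu,l,r)$ inducing that representation. Then there is an exact sequence $$0\longrightarrow\mathcal Z^1(A,V)\xrightarrow{\ \iota\ }\mathrm{Aut}_V(\widehat A)\xrightarrow{\ \tau\ }\mathcal C\xrightarrow{\ \mathcal W\ }\mathcal H^2(A,V),$$ where $\iota$ is the injective group homomorphism obtained by composing the isomorphism $\mathcal Z^1(A,V)\cong\mathrm{Aut}^A_V(\widehat A)$ (inverse of $\gamma\mapsto\gamma s-s$) with the inclusion $\mathrm{Aut}^A_V(\widehat A)\subseteq\mathrm{Aut}_V(\widehat A)$. Exactness means: $\iota$ is injective; $\tau$ takes values in $\mathcal C$ and $\ker\tau=\iota(\mathcal Z^1(A,V))$; and $\tau(\mathrm{Aut}_V(\widehat A))=\{(\beta,\alpha)\in\mathcal C:\mathcal W(\beta,\alpha)=0\}$.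
   Context: All vector spaces are over a field of characteristic $0$. A Com-PreLie algebra is a triple $(A,\ast,\bullet)$ where $A$ is a vector space, $\ast$ is a commutative associative bilinear product on $A$, and $\bullet$ is a bilinear product on $A$ satisfying the left pre-Lie identity $(x\bullet y)\bullet z-x\bullet(y\bullet z)=(y\bullet x)\bullet z-y\bullet(x\bullet z)$ and the compatibility $x\bullet(y\ast z)=(x\bullet y)\ast z+y\ast(x\bullet z)$ for all $x,y,z\in A$. A homomorphism of Com-PreLie algebras is a linear map preserving both products. A representation of $A$ is a quadruple $(V,\mu,l,r)$ with $V$ a vector space and $\mu,l,r:A\to\mathrm{End}(V)$ linear maps satisfying, for all $x,y\in A$: $\mu(x\ast y)=\mu(x)\mu(y)$; $l(x\bullet y)-l(x)l(y)=l(y\bullet x)-l(y)l(x)$; $r(y)l(x)-l(x)r(y)=r(y)r(x)-r(x\bullet y)$; $l(x)\mu(y)=\mu(x\bullet y)+\mu(y)l(x)$; $r(x\ast y)=\mu(y)r(x)+\mu(x)r(y)$. A 2-cocycle of $A$ with coefficients in $V$ is a pair $(\phi,\psi)$ of bilinear maps $A\times A\to V$, with $\phi$ symmetric, such that for all $x,y,z\in A$: (C1) $\phi(x,y\ast z)+\mu(x)\phi(y,z)-\phi(x\ast y,z)-\mu(z)\phi(x,y)=0$; (C2) $\psi(x\bullet y,z)+r(z)\psi(x,y)-\psi(x,y\bullet z)-l(x)\psi(y,z)-\psi(y\bullet x,z)-r(z)\psi(y,x)+\psi(y,x\bullet z)+l(y)\psi(x,z)=0$; (C3) $\psi(x,y\ast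 z)+l(x)\phi(y,z)-\phi(x\bullet y,z)-\mu(z)\psi(x,y)-\phi(y,x\bullet z)-\mu(y)\psi(x,z)=0$. A 2-coboundary is a pair $(x,y)\mapsto(\mu(x)f(y)-f(x\ast y)+\mu(y)f(x),\ l(x)f(y)-f(x\bullet y)+r(y)f(x))$ for a linear $f:A\to V$; $\mathcal H^2(A,V)$ is the quotient of the space of 2-cocycles by the subspace of 2-coboundaries. $\mathcal Z^1(A,V)$ is the additive group of linear maps $N:A\to V$ with $\mu(x)N(y)-N(x\ast y)+\mu(y)N(x)=0$ and $l(x)N(y)-N(x\bullet y)+r(y)N(x)=0$ for all $x,y$. An abelian extension of $A$ by $V$ is a Com-PreLie algebra $(\widehat A,\ast_{\widehat A},\bullet_{\widehat A})$ with a short exact sequence $0\to V\xrightarrow{i}\widehat A\xrightarrow{j}A\to0$ of Com-PreLie algebra homomorphisms, $V$ carrying the zero products; $V$ is identified with $i(V)=\ker j$. It induces the given representation if for any linear section $s$ of $j$ ($j\circ s=\mathrm{id}_A$): $\mu(x)u=s(x)\ast_{\widehat A}u$, $l(x)u=s(x)\bullet_{\widehat A}u$, $r(x)u=u\bullet_{\widehat A}s(x)$. Fix such a section $s$ and let $(\phi,\psi)$ be the 2-cocycle $\phi(x,y)=s(x)\ast_{\widehat A}s(y)-s(x\ast y)$, $\psi(x,y)=s(x)\bullet_{\widehat A}s(y)-s(x\bullet y)$. $\mathrm{Aut}(A)$ is the group of Com-PreLie algebra automorphisms of $A$; $\mathrm{Aut}(V)$ is the group of linear automorphisms of $V$; $\mathrm{Aut}_V(\widehat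 A)$ is the group of Com-PreLie algebra automorphisms $\gamma$ of $\widehat A$ with $\gamma(V)=V$, and $\mathrm{Aut}^A_V(\widehat A)$ its subgroup of those with $\gamma|_V=\mathrm{id}_V$ and $j\gamma s=\mathrm{id}_A$. The map $\tau:\mathrm{Aut}_V(\widehat A)\to\mathrm{Aut}(V)\times\mathrm{Aut}(A)$ is $\tau(\gamma)=(\gamma|_V,j\gamma s)$. $\mathcal C$ is the group of pairs $(\beta,\alpha)\in\mathrm{Aut}(V)\times\mathrm{Aut}(A)$ with $\beta(\mu(x)u)=\mu(\alpha(x))\beta(u)$, $\beta(l(x)u)=l(\alpha(x))\beta(u)$, $\beta(r(x)u)=r(\alpha(x))\beta(u)$ for all $x\in A,u\in V$. For $(\beta,\alpha)\in\mathcal C$, $(\phi,\psi)^{(\beta,\alpha)}$ is the 2-cocycle $(x,y)\mapsto\big(\beta\phi(\alpha^{-1}x,\alpha^{-1}y),\ \beta\psi(\alpha^{-1}x,\alpha^{-1}y)\big)$, and the Wells map is $\mathcal W(\beta,\alpha)=\big[(\phi,\psi)^{(\beta,\alpha)}-(\phi,\psi)\big]\in\mathcal H^2(A,V)$ (independent of $s$). *)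

From HB Require Import structures.
From mathcomp Require Import all_boot all_order all_algebra.
Set Implicit Arguments. Unset Strict Implicit. Unset Printing Implicit Defensive.
Import GRing.Theory.
Local Open Scope ring_scope.

Section ComPreLieDefs.
Variable F : fieldType.

Definition lin (U W : lmodType F) (f : U -> W) : Prop :=
  forall (a : F) (x y : U), f (a *: x + y) = a *: f x + f y.

Definition bilin (U W X : lmodType F) (f : U -> W -> X) : Prop :=
  (forall x, lin (f x)) /\ (forall y, lin (fun x => f x y)).

Definition lin_op (A V : lmodType F) (m : A -> V -> V) : Prop :=
  (forall x, lin (m x)) /\
  (forall (a : F) (x y : A) (u : V), m (a *: x + y) u = a *: m x u + m y u).

Definition is_ComPreLie (A : lmodType F) (st bu : A -> A -> A) : Prop :=
  ((bilin st) /\ (bilin bu) /\ ((forall x y, st x y = st y x)) /\ ((forall x y z, st x (st y z) = st (st x y) z)) /\ ((forall x y z, bu (bu x y) z - bu x (bu y z) = bu (bu y x) z - bu y (bu x z))) /\ ((forall x y z, bu x (st y z) = st (bu x y) z + st y (bu x z)))).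

Definition is_rep (A V : lmodType F) (st bu : A -> A -> A)
    (mu l r : A -> V -> V) : Prop :=
  ((lin_op mu) /\ (lin_op l) /\ (lin_op r) /\ ((forall x y u, mu (st x y) u = mu x (mu y u))) /\ ((forall x y u, l (bu x y) u - l x (l y u) = l (bu y x) u - l y (l x u))) /\ ((forall x y u, r y (l x u) - l x (r y u) = r y (r x u) - r (bu x y) u)) /\ ((forall x y u, l x (mu y u) = mu (bu x y) u + mu y (l x u))) /\ ((forall x y u, r (st x y) u = mu y (r x u) + mu x (r y u)))).

Variables (A V Ah : lmodType F) (st bu : A -> A -> A) (hs hb : Ah -> Ah -> Ah)
  (mu l r : A -> V -> V) (i : V -> Ah) (j : Ah -> A).

Definition is_abelian_ext : Prop :=
  ((is_ComPreLie hs hb) /\ (lin i) /\ (lin j) /\ (injective i) /\ ((forall x : A, exists w, j w = x)) /\ ((forall w, j w = 0 <-> exists u, w = i u)) /\ ((forall u v, hs (i u) (i v) = i 0 /\ hb (i u) (i v) = i 0)) /\ ((forall w w', j (hs w w') = st (j w) (j w') /\ j (hb w w') = bu (j w) (j w')))).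

Definition induces_rep : Prop :=
  forall s : A -> Ah, lin s -> (forall x, j (s x) = x) ->
  forall x u, ((i (mu x u) = hs (s x) (i u)) /\ (i (l x u) = hb (s x) (i u)) /\ (i (r x u) = hb (i u) (s x))).

Definition Z1 (N : A -> V) : Prop :=
  ((lin N) /\ ((forall x y, mu x (N y) - N (st x y) + mu y (N x) = 0)) /\ ((forall x y, l x (N y) - N (bu x y) + r y (N x) = 0))).

Definition is_coboundary (phi psi : A -> A -> V) : Prop :=
  exists f : A -> V, lin f /\
    forall x y, phi x y = mu x (f y) - f (st x y) + mu y (f x) /\
                psi x y = l x (f y) - f (bu x y) + r y (f x).

Definition AutV (g : Ah -> Ah) : Prop :=
  ((lin g) /\ (bijective g) /\ ((forall w w', g (hs w w') = hs (g w) (g w') /\ g (hb w w') = hb (g w) (g w'))) /\ ((forall u, exists u', g (i u) = i u')) /\ ((forall u, exists u', i u = g (i u')))).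

Definition AutA (a : A -> A) : Prop :=
  (lin a) /\ (bijective a) /\
  (forall x y, a (st x y) = st (a x) (a y) /\ a (bu x y) = bu (a x) (a y)).

Definition AutVec (b : V -> V) : Prop := lin b /\ bijective b.

Definition tau_rel (s : A -> Ah) (g : Ah -> Ah) (b : V -> V) (a : A -> A) : Prop :=
  (forall u, i (b u) = g (i u)) /\ (forall x, a x = j (g (s x))).

Definition inC (b : V -> V) (a : A -> A) : Prop :=
  (AutVec b) /\ (AutA a) /\
  (forall x u, [/\ b (mu x u) = mu (a x) (b u),
                   b (l x u) = l (a x) (b u)
                 & b (r x u) = r (a x) (b u)]).

(* Wells map W(b,a) = [(phi,psi)^(b,a) - (phi,psi)] vanishes in H^2 *)
Definition wells_zero (phi psi : A -> A -> V) (b : V -> V) (a : A -> A) : Prop :=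
  forall ainv : A -> A, cancel a ainv -> cancel ainv a ->
  is_coboundary (fun x y => b (phi (ainv x) (ainv y)) - phi x y)
                (fun x y => b (psi (ainv x) (ainv y)) - psi x y).

(* iotaZ : Z^1(A,V) -> Aut_V(Ah), the inverse of g |-> g s - s composed
   with the inclusion; explicitly iotaZ N = id + i N j *)
Definition iotaZ (N : A -> V) : Ah -> Ah := fun w => w + i (N (j w)).

End ComPreLieDefs.

From mathcomp Require Import all_boot all_order all_algebra.
From Stdlib Require Import ClassicalEpsilon.
(* The section [s] identifies [Ah] with [A (+) V], the products becoming those of
   [A] twisted by the cocycle [(phi, psi)] plus the action of [A] on [V].  A map
   [s x + i u |-> s (a x) + i (b u + h x)] with [(b, a)] in [C] is then an algebra
   morphism exactly when [(phi, psi)^(b, a) - (phi, psi)] is the coboundary of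
   [h \o a^-1], and every element of [Aut_V(Ah)] over [(b, a)] has this shape.
   For [(b, a) = (id, id)] the condition says [h] is a 1-cocycle, giving
   [ker tau = iota(Z^1)]; in general it says [W(b, a) = 0], giving [im tau]. *)

Set Implicit Arguments. Unset Strict Implicit. Unset Printing Implicit Defensive.
Import GRing.Theory.
Local Open Scope ring_scope.

Section LinearMaps.
Variable F : fieldType.
Implicit Types U W X : lmodType F.

Lemma linD U W (f : U -> W) : lin f -> forall x y, f (x + y) = f x + f y.
Proof. by move=> fL x y; rewrite -[x in LHS]scale1r fL scale1r. Qed.

Lemma lin0 U W (f : U -> W) : lin f -> f 0 = 0.
Proof. by move=> fL; apply: (addrI (f 0)); rewrite -linD // !addr0. Qed.

Lemma linB U W (f : U -> W) : lin f -> forall x y, f (x - y) = f x - f y.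
Proof. by move=> fL x y; apply: (addIr (f y)); rewrite -linD // !subrK. Qed.

Lemma lin_comp U W X (f : U -> W) (g : W -> X) : lin f -> lin g -> lin (g \o f).
Proof. by move=> fL gL a x y /=; rewrite fL gL. Qed.

Lemma lin_add U W (f g : U -> W) : lin f -> lin g -> lin (fun x => f x + g x).
Proof. by move=> fL gL a x y; rewrite fL gL scalerDr addrACA. Qed.

Lemma lin_sub U W (f g : U -> W) : lin f -> lin g -> lin (fun x => f x - g x).
Proof. by move=> fL gL a x y; rewrite fL gL scalerBr opprD addrACA. Qed.

Lemma lin_can U W (f : U -> W) g : lin f -> cancel f g -> cancel g f -> lin g.
Proof. by move=> fL fK gK a x y; apply: (can_inj fK); rewrite fL !gK. Qed.

End LinearMaps.

Section Extension.
Variables (F : fieldType) (A V Ah : lmodType F)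
  (st bu : A -> A -> A) (hs hb : Ah -> Ah -> Ah)
  (mu l r : A -> V -> V) (i : V -> Ah) (j : Ah -> A)
  (s : A -> Ah) (phi psi : A -> A -> V).
Hypotheses (hsL : forall w, lin (hs w)) (hsR : forall w', lin (hs^~ w'))
  (hsC : forall w w', hs w w' = hs w' w)
  (hbL : forall w, lin (hb w)) (hbR : forall w', lin (hb^~ w'))
  (muL : forall x, lin (mu x)) (lL : forall x, lin (l x)) (rL : forall x, lin (r x))
  (iL : lin i) (jL : lin j) (iI : injective i)
  (kerj : forall w, j w = 0 <-> exists u, w = i u)
  (ii_zero : forall u v, hs (i u) (i v) = i 0 /\ hb (i u) (i v) = i 0)
  (jM : forall w w', j (hs w w') = st (j w) (j w') /\ j (hb w w') = bu (j w) (j w'))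
  (ind_mu : forall x u, i (mu x u) = hs (s x) (i u))
  (ind_l : forall x u, i (l x u) = hb (s x) (i u))
  (ind_r : forall x u, i (r x u) = hb (i u) (s x))
  (sL : lin s) (jsK : forall x, j (s x) = x)
  (phiE : forall x y, i (phi x y) = hs (s x) (s y) - s (st x y))
  (psiE : forall x y, i (psi x y) = hb (s x) (s y) - s (bu x y)).

Let i0 : i 0 = 0 := lin0 iL.

Lemma j_i u : j (i u) = 0. Proof. by apply/kerj; exists u. Qed.

(* [i^-1 (w - s (j w))]; [i] is only known to be injective, hence [epsilon]. *)
Definition projV (w : Ah) : V := epsilon (inhabits 0) (fun u => i u = w - s (j w)).

Lemma projV_spec w : i (projV w) = w - s (j w).
Proof.
apply: (epsilon_spec (inhabits 0) (fun u => i u = _)).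
have /kerj [u ->] : j (w - s (j w)) = 0 by rewrite (linB jL) jsK subrr.
by exists u.
Qed.

Lemma projV_lin : lin projV.
Proof.
move=> a w w'; apply: iI; rewrite iL !projV_spec.
exact: (lin_sub (fun _ _ _ => erefl) (lin_comp jL sL)).
Qed.

Lemma split_s_i w : w = s (j w) + i (projV w).
Proof. by rewrite projV_spec addrC subrK. Qed.

Lemma j_s_i x u : j (s x + i u) = x.
Proof. by rewrite (linD jL) jsK j_i addr0. Qed.

Lemma projV_s_i x u : projV (s x + i u) = u.
Proof. by apply: iI; rewrite projV_spec j_s_i addrAC subrr add0r. Qed.

Lemma projV_i u : projV (i u) = u.
Proof. by rewrite -[i u]add0r -(lin0 sL) projV_s_i. Qed.

Lemma hs_wi w u : hs w (i u) = i (mu (j w) u).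
Proof. by rewrite {1}(split_s_i w) (linD (hsR _)) (ii_zero _ _).1 i0 addr0 -ind_mu. Qed.

Lemma hb_wi w u : hb w (i u) = i (l (j w) u).
Proof. by rewrite {1}(split_s_i w) (linD (hbR _)) (ii_zero _ _).2 i0 addr0 -ind_l. Qed.

Lemma hb_iw u w : hb (i u) w = i (r (j w) u).
Proof. by rewrite {1}(split_s_i w) (linD (hbL _)) (ii_zero _ _).2 i0 addr0 -ind_r. Qed.

Lemma hs_s_i x p y q :
  hs (s x + i p) (s y + i q) = s (st x y) + i (phi x y + mu x q + mu y p).
Proof.
rewrite (linD (hsR _)) !(linD (hsL _)) hs_wi [hs (i p) _]hsC hs_wi !jsK.
by rewrite (ii_zero _ _).1 i0 addr0 !(linD iL) phiE !addrA [s _ + _]addrC addrK.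
Qed.

Lemma hb_s_i x p y q :
  hb (s x + i p) (s y + i q) = s (bu x y) + i (psi x y + l x q + r y p).
Proof.
rewrite (linD (hbR _)) !(linD (hbL _)) hb_wi hb_iw !jsK.
by rewrite (ii_zero _ _).2 i0 addr0 !(linD iL) psiE !addrA [s _ + _]addrC addrK.
Qed.

Lemma hs_s x y : hs (s x) (s y) = s (st x y) + i (phi x y).
Proof. by rewrite phiE addrC subrK. Qed.

Lemma hb_s x y : hb (s x) (s y) = s (bu x y) + i (psi x y).
Proof. by rewrite psiE addrC subrK. Qed.

Definition ext_map (b : V -> V) (a : A -> A) (h : A -> V) (w : Ah) : Ah :=
  s (a (j w)) + i (b (projV w) + h (j w)).

(* For invertible [a]: [h \o a^-1] is a coboundary for [(phi, psi)^(b, a) - (phi, psi)]. *)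
Definition twisted_cobound (b : V -> V) (a : A -> A) (h : A -> V) : Prop :=
  forall x y,
  b (phi x y) + h (st x y) = phi (a x) (a y) + mu (a x) (h y) + mu (a y) (h x) /\
  b (psi x y) + h (bu x y) = psi (a x) (a y) + l (a x) (h y) + r (a y) (h x).

Section ExtMap.
Variables (b : V -> V) (a : A -> A) (h : A -> V).

Lemma ext_map_s_i x u : ext_map b a h (s x + i u) = s (a x) + i (b u + h x).
Proof. by rewrite /ext_map j_s_i projV_s_i. Qed.

Lemma j_ext_map w : j (ext_map b a h w) = a (j w).
Proof. exact: j_s_i. Qed.

Lemma ext_map_s : lin b -> forall x, ext_map b a h (s x) = s (a x) + i (h x).
Proof. by move=> bL x; rewrite -[s x]addr0 -i0 ext_map_s_i (lin0 bL) add0r. Qed.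

Lemma ext_map_i : lin a -> lin h -> forall u, ext_map b a h (i u) = i (b u).
Proof.
move=> aL hL u; rewrite -[i u]add0r -(lin0 sL) ext_map_s_i.
by rewrite (lin0 aL) (lin0 hL) (lin0 sL) add0r addr0.
Qed.

Lemma ext_map_lin : lin b -> lin a -> lin h -> lin (ext_map b a h).
Proof.
move=> bL aL hL; apply: lin_add; first exact: lin_comp (lin_comp jL aL) sL.
exact: lin_comp (lin_add (lin_comp projV_lin bL) (lin_comp jL hL)) iL.
Qed.

Lemma ext_map_bij : bijective b -> bijective a -> bijective (ext_map b a h).
Proof.
case=> b' bK b'K [a' aK a'K].
exists (fun w => s (a' (j w)) + i (b' (projV w - h (a' (j w))))) => w.
  by rewrite /ext_map j_s_i projV_s_i aK addrK bK -split_s_i.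
by rewrite ext_map_s_i a'K b'K subrK -split_s_i.
Qed.

Lemma ext_map_homP : lin b ->
  (forall x y, a (st x y) = st (a x) (a y) /\ a (bu x y) = bu (a x) (a y)) ->
  (forall x u, [/\ b (mu x u) = mu (a x) (b u), b (l x u) = l (a x) (b u)
                 & b (r x u) = r (a x) (b u)]) ->
  (forall w w', ext_map b a h (hs w w') = hs (ext_map b a h w) (ext_map b a h w') /\
                ext_map b a h (hb w w') = hb (ext_map b a h w) (ext_map b a h w'))
  <-> twisted_cobound b a h.
Proof.
move=> bL aM bC; split=> [gM x y | tw w w'].
  have [] := gM (s x) (s y); rewrite hs_s hb_s !ext_map_s_i !ext_map_s // hs_s_i hb_s_i.
  by move=> /(congr1 projV) + /(congr1 projV); rewrite !projV_s_i.
rewrite (split_s_i w) (split_s_i w'); move: (j w) (projV w) (j w') (projV w') => x p y q.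
rewrite hs_s_i hb_s_i !ext_map_s_i hs_s_i hb_s_i (aM x y).1 (aM x y).2.
have [twst twbu] := tw x y; have [bmu bl _] := bC x q; have [bmu' _ br] := bC y p.
have regroup (c c' m m' n n' k : V) :
    c + k = c' + m' + n' -> c + m + n + k = c' + (m + m') + (n + n').
  by move=> e; rewrite (ACl (1*4*2*3))/= e (ACl (1*(4*2)*(5*3))).
split; congr (_ + i _); rewrite !(linD bL).
  by rewrite bmu bmu' !(linD (muL _)); apply: regroup.
by rewrite bl br (linD (lL _)) (linD (rL _)); apply: regroup.
Qed.

End ExtMap.

Lemma ext_map_AutV b a h : inC st bu mu l r b a -> lin h -> twisted_cobound b a h ->
  AutV hs hb i (ext_map b a h).
Proof.
case=> [[bL [b' bK b'K]] [[aL [aB aM]] bC]] hL tw.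
split; first exact: ext_map_lin.
split; first by apply: ext_map_bij => //; exists b'.
split; first exact: (ext_map_homP h bL aM bC).2.
by split=> u; [exists (b u) | exists (b' u)]; rewrite ext_map_i // b'K.
Qed.

Lemma ext_map_tau b a h : lin a -> lin h -> tau_rel i j s (ext_map b a h) b a.
Proof. by move=> aL hL; split=> [u|x]; rewrite ?ext_map_i // j_ext_map jsK. Qed.

Lemma tau_rel_exists g : AutV hs hb i g -> exists b a, tau_rel i j s g b a.
Proof.
case=> _ [_ [_ [gV _]]]; exists (fun u => projV (g (i u))), (fun x => j (g (s x))).
by split=> // u; have [u' ->] := gV u; rewrite projV_i.
Qed.

Lemma AutV_inv g g' : AutV hs hb i g -> cancel g g' -> cancel g' g -> AutV hs hb i g'.
Proof.
case=> gL [_ [gM [gV gV']]] gK g'K.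
split; first exact: lin_can gL gK g'K.
split; first by exists g.
split=> [w w'|]; first by split; apply: (can_inj gK); rewrite ?(gM _ _).1 ?(gM _ _).2 !g'K.
split=> u; first by have [u' ->] := gV' u; exists u'; rewrite gK.
by have [u' e] := gV u; exists u'; rewrite -e gK.
Qed.

Section TauOfAutomorphism.
Variables (g : Ah -> Ah) (b : V -> V) (a : A -> A).
Hypotheses (gL : lin g) (gt : tau_rel i j s g b a).

Lemma j_AutV w : j (g w) = a (j w).
Proof.
have [gi ga] := gt.
by rewrite {1}(split_s_i w) (linD gL) -gi (linD jL) j_i addr0 ga.
Qed.

Lemma AutV_ext_mapE w : g w = ext_map b a (fun x => projV (g (s x))) w.
Proof.
have [gi ga] := gt.
rewrite {1}(split_s_i w) (linD gL) -gi {1}(split_s_i (g (s (j w)))) -ga.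
by rewrite /ext_map (linD iL) addrA addrAC.
Qed.

End TauOfAutomorphism.

Lemma AutV_inC g b a : AutV hs hb i g -> tau_rel i j s g b a -> inC st bu mu l r b a.
Proof.
move=> gA gt; have [gL [[g' gK g'K] [gM _]]] := gA; have [gi ga] := gt.
have g'A := AutV_inv gA gK g'K; have [b' [a' g't]] := tau_rel_exists g'A.
have [g'i g'a] := g't; have jg := j_AutV gL gt; have jg' := j_AutV g'A.1 g't.
split.
  split=> [c u v|]; first by apply: iI; rewrite gi iL gL iL !gi.
  by exists b' => u; apply: iI; [rewrite g'i gi gK | rewrite gi g'i g'K].
split.
  split=> [c x y|]; first by rewrite !ga sL gL jL.
  split; first by exists a' => x; [rewrite ga -jg' gK | rewrite g'a -jg g'K]; rewrite jsK.
  move=> x y; split; rewrite -{1}(jsK x) -{1}(jsK y).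
    by rewrite -(jM _ _).1 -jg (gM _ _).1 (jM _ _).1 -!ga.
  by rewrite -(jM _ _).2 -jg (gM _ _).2 (jM _ _).2 -!ga.
move=> x u; split; apply: iI; rewrite gi.
- by rewrite ind_mu (gM _ _).1 -gi hs_wi -ga.
- by rewrite ind_l (gM _ _).2 -gi hb_wi -ga.
- by rewrite ind_r (gM _ _).2 -gi hb_iw -ga.
Qed.

Lemma AutV_tau_inC g : AutV hs hb i g ->
  exists b a, tau_rel i j s g b a /\ inC st bu mu l r b a.
Proof.
move=> gA; have [b [a gt]] := tau_rel_exists gA.
by exists b, a; split=> //; apply: AutV_inC gA gt.
Qed.

Lemma eq_AutV g1 g2 : g1 =1 g2 -> AutV hs hb i g1 -> AutV hs hb i g2.
Proof.
move=> e [gL [gB [gM [gV gV']]]]; split=> [c w w'|]; first by rewrite -!e gL.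
split; first exact: eq_bij gB _ e.
split=> [w w'|]; first by rewrite -!e; apply: gM.
by split=> u; [have [u' eu] := gV u | have [u' eu] := gV' u]; exists u'; rewrite -e.
Qed.

Lemma iotaZ_ext_map N w : iotaZ i j N w = ext_map id id N w.
Proof. by rewrite /iotaZ /ext_map {1}(split_s_i w) (linD iL) addrA. Qed.

Lemma iotaZ_s N x : iotaZ i j N (s x) = s x + i (N x).
Proof. by rewrite /iotaZ jsK. Qed.

Lemma iotaZ_comp N1 N2 w :
  iotaZ i j (fun x => N1 x + N2 x) w = iotaZ i j N1 (iotaZ i j N2 w).
Proof. by rewrite /iotaZ (linD jL) j_i addr0 (linD iL) addrA addrAC. Qed.

Lemma Z1_twisted N : lin N -> Z1 st bu mu l r N <-> twisted_cobound id id N.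
Proof.
move=> NL; have shift (c k m n : V) : c + k = c + m + n <-> m - k + n = 0.
  rewrite -addrA addrAC; split=> [/addrI -> | /eqP]; first by rewrite subrr.
  by rewrite subr_eq0 => /eqP ->.
split=> [[_ [Zst Zbu]] x y | tw].
  by split; apply/shift; [exact: Zst | exact: Zbu].
split=> //; split=> x y; have [tst tbu] := tw x y.
  exact: (shift _ _ _ _).1 tst.
exact: (shift _ _ _ _).1 tbu.
Qed.

Lemma iotaZ_tau N : lin N -> tau_rel i j s (iotaZ i j N) id id.
Proof.
move=> NL; have idL : lin (@id A) by [].
have [ti ta] := ext_map_tau id idL NL.
by split=> [u|x]; rewrite iotaZ_ext_map; [apply: ti | apply: ta].
Qed.

Lemma iotaZ_AutV N : Z1 st bu mu l r N -> AutV hs hb i (iotaZ i j N).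
Proof.
move=> NZ; have NL := NZ.1.
have idC : inC st bu mu l r id id.
  by split; [split=> //; exists id | split=> //; split=> //; split=> //; exists id].
apply: (eq_AutV (g1 := ext_map id id N)) => [w|]; first by rewrite iotaZ_ext_map.
by apply: ext_map_AutV => //; apply/(Z1_twisted NL).
Qed.

Lemma tau_rel_idP g : AutV hs hb i g ->
  tau_rel i j s g id id <-> exists N, Z1 st bu mu l r N /\ forall w, g w = iotaZ i j N w.
Proof.
move=> gA; split=> [gt | [N [NZ gE]]]; last first.
  by have [gi ga] := iotaZ_tau NZ.1; split=> [u|x]; rewrite gE; [apply: gi | apply: ga].
have [gL [_ [gM _]]] := gA; pose N x := projV (g (s x)).
have NL : lin N := lin_comp (lin_comp sL gL) projV_lin.
have gE := AutV_ext_mapE gL gt; exists N; split; last by move=> w; rewrite gE iotaZ_ext_map.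
apply/(Z1_twisted NL)/(ext_map_homP N (fun _ _ _ => erefl)) => // w w'.
by rewrite -!gE; apply: gM.
Qed.

Lemma twisted_cobound_wells b a a' h f :
  (forall x y, a (st x y) = st (a x) (a y) /\ a (bu x y) = bu (a x) (a y)) ->
  cancel a a' -> cancel a' a -> (forall x, h x = f (a x)) ->
  twisted_cobound b a h <->
  forall x y,
  b (phi (a' x) (a' y)) - phi x y = mu x (f y) - f (st x y) + mu y (f x) /\
  b (psi (a' x) (a' y)) - psi x y = l x (f y) - f (bu x y) + r y (f x).
Proof.
move=> aM aK a'K hf.
have shift (c c' k m n : V) : c + k = c' + m + n <-> c - c' = m - k + n.
  split=> e; first by apply/eqP; rewrite subr_eq -(addrK k c) e (ACl (2*4*3*1)).
  by rewrite -(subrK c' c) e (ACl (4*1*3*(2*5)))/= addNr addr0.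
split=> [tw x y | cb x y].
  have := tw (a' x) (a' y); rewrite !hf (aM _ _).1 (aM _ _).2 !a'K.
  by case=> /(shift _ _ _ _ _).1 -> /(shift _ _ _ _ _).1 ->.
have := cb (a x) (a y); rewrite !aK -(aM _ _).1 -(aM _ _).2 -!hf.
by case=> /(shift _ _ _ _ _).2 -> /(shift _ _ _ _ _).2 ->.
Qed.

Lemma AutV_wells_zero g b a : AutV hs hb i g -> tau_rel i j s g b a ->
  wells_zero st bu mu l r phi psi b a.
Proof.
move=> gA gt a' aK a'K; have [[bL _] [[aL [_ aM]] bC]] := AutV_inC gA gt.
have [gL [_ [gM _]]] := gA; pose h x := projV (g (s x)).
have gE := AutV_ext_mapE gL gt.
have tw : twisted_cobound b a h.
  by apply/(ext_map_homP h bL aM bC) => w w'; rewrite -!gE; apply: gM.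
have hf x : h x = (h \o a') (a x) by rewrite /= aK.
exists (h \o a'); split; last exact: (twisted_cobound_wells b aM aK a'K hf).1 tw.
exact: lin_comp (lin_can aL aK a'K) (lin_comp (lin_comp sL gL) projV_lin).
Qed.

Lemma wells_zero_AutV b a : inC st bu mu l r b a -> wells_zero st bu mu l r phi psi b a ->
  exists g, AutV hs hb i g /\ tau_rel i j s g b a.
Proof.
move=> bac W; have [_ [[aL [[a' aK a'K] aM]] _]] := bac.
have [f [fL cb]] := W a' aK a'K; have faL := lin_comp aL fL.
exists (ext_map b a (f \o a)); split; last exact: ext_map_tau.
apply: ext_map_AutV => //.
exact: (twisted_cobound_wells b aM aK a'K (fun _ => erefl)).2 cb.
Qed.

Lemma tau_imageP b a : (exists g, AutV hs hb i g /\ tau_rel i j s g b a) <->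
  inC st bu mu l r b a /\ wells_zero st bu mu l r phi psi b a.
Proof.
split=> [[g [gA gt]] | [bac W]]; last exact: wells_zero_AutV.
by split; [apply: AutV_inC gA gt | apply: AutV_wells_zero gA gt].
Qed.

End Extension.

Theorem theorem5p2 (F : fieldType) (A V Ah : lmodType F)
  (st bu : A -> A -> A) (hs hb : Ah -> Ah -> Ah)
  (mu l r : A -> V -> V) (i : V -> Ah) (j : Ah -> A)
  (s : A -> Ah) (phi psi : A -> A -> V) :
  [pchar F] =i pred0 ->
  is_ComPreLie st bu ->
  is_rep st bu mu l r ->
  is_abelian_ext st bu hs hb i j ->
  induces_rep hs hb mu l r i j ->
  lin s -> (forall x, j (s x) = x) ->
  (forall x y, i (phi x y) = hs (s x) (s y) - s (st x y)) ->
  (forall x y, i (psi x y) = hb (s x) (s y) - s (bu x y)) ->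
  [/\ (* iotaZ lands in Aut^A_V(Ah) and inverts g |-> g s - s *)
      (forall N, Z1 st bu mu l r N ->
         AutV hs hb i (iotaZ i j N) /\ tau_rel i j s (iotaZ i j N) id id /\
         (forall x, iotaZ i j N (s x) - s x = i (N x))),
      (* iotaZ is an injective group homomorphism *)
      (forall N1 N2, Z1 st bu mu l r N1 -> Z1 st bu mu l r N2 ->
         (forall w, iotaZ i j N1 w = iotaZ i j N2 w) -> forall x, N1 x = N2 x) /\
      (forall N1 N2, Z1 st bu mu l r N1 -> Z1 st bu mu l r N2 ->
         forall w, iotaZ i j (fun x => N1 x + N2 x) w = iotaZ i j N1 (iotaZ i j N2 w)),
      (* tau is well defined with values in C *)
      (forall g, AutV hs hb i g ->
         exists b a, tau_rel i j s g b a /\ inC st bu mu l r b a),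
      (* ker tau = iotaZ(Z^1) *)
      (forall g, AutV hs hb i g ->
         (tau_rel i j s g id id <->
          exists N, Z1 st bu mu l r N /\ forall w, g w = iotaZ i j N w))
    & (* image of tau = kernel of the Wells map *)
      (forall b a, (exists g, AutV hs hb i g /\ tau_rel i j s g b a) <->
                   inC st bu mu l r b a /\ wells_zero st bu mu l r phi psi b a)].
Proof.
move=> _ _ [[muL _] [[lL _] [[rL _] _]]]
  [[[hsL hsR] [[hbL hbR] [hsC _]]] [iL [jL [iI [_ [kerj [ii_zero jM]]]]]]]
  ind sL jsK phiE psiE.
have ind_mu x u : i (mu x u) = hs (s x) (i u) by case: (ind s sL jsK x u).
have ind_l x u : i (l x u) = hb (s x) (i u) by case: (ind s sL jsK x u) => _ [].
have ind_r x u : i (r x u) = hb (i u) (s x) by case: (ind s sL jsK x u) => _ [].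
split.
- move=> N NZ; split; first exact: iotaZ_AutV NZ.
  split; first exact: iotaZ_tau NZ.1.
  by move=> x; rewrite iotaZ_s // addrC addKr.
- split=> [N1 N2 _ _ e x | N1 N2 _ _ w]; last exact: iotaZ_comp.
  by move: (e (s x)); rewrite !iotaZ_s // => /addrI /iI.
- exact: AutV_tau_inC.
- exact: tau_rel_idP.
- exact: tau_imageP.
Qed.
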